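(* Let $\alpha=[0;a_1,a_2,\ldots]\in\mathbf{Bad}$ and let $(p_n/q_n)_{n\ge1}$ be the sequence of its convergents. Assume that there exist a positive rational number $x$ and two sequences of finite words $(U_k)_{k\ge1}$ and $(V_k)_{k\ge1}$ over the positive integers such that, for every $k\ge1$, the sequence of partial quotients $a_1a_2\ldots$ of $\alpha$ begins with the word $V_kU_k\overline{U}_k$, and $|U_{k+1}|>|U_k|\ge x|V_k|$. Set $M=\limsup_{\ell\to+\infty}q_\ell^{1/\ell}$ and $m=\liminf_{\ell\to+\infty}q_\ell^{1/\ell}$. If $$x>\frac32\cdot\frac{\log M}{\log m}-\frac12,$$ then for every real number $\beta$ equal to $\alpha$ up to a rational homography one has $\inf_{q\ge1}q\cdot\Vert q\alpha\Vert\cdot\Vert q\beta\Vert=0$.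
   Context: For a real number $y$, $\Vert y\Vert$ denotes the distance from $y$ to the nearest integer. $\mathbf{Bad}=\{\alpha\in\mathbb{R} : \inf_{q\ge1} q\Vert q\alpha\Vert>0\}$ (equivalently, real numbers with bounded partial quotients). A finite word $W=w_1\ldots w_r$ over the positive integers is identified with the sequence of partial quotients $w_1,\ldots,w_r$; $|W|$ denotes its length and $\overline{W}=w_r\ldots w_1$ its mirror image. A real number $\beta$ is equal to $\alpha$ up to a rational homography if $\beta=(a\alpha+b)/(c\alpha+d)$ for some integers $a,b,c,d$ with $ad-bc\neq0$. *)

From Stdlib Require Import Reals Lra Lia List.
From Coquelicot Require Import Coquelicot.
Open Scope R_scope.

Definition dnint (y : R) : R := Rmin (frac_part y) (1 - frac_part y).

Definition Bad (alpha : R) : Prop :=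
  exists c : R, 0 < c /\ forall q : nat, (1 <= q)%nat ->
    c <= INR q * dnint (INR q * alpha).

(* Partial quotients are given by a : nat -> nat with a i = a_{i+1}
   (so the sequence a_1 a_2 ... is a 0, a 1, ...).
   cf_pq a n = (p_n, q_n): p_0 = 0, q_0 = 1, p_1 = 1, q_1 = a_1,
   p_{n+2} = a_{n+2} p_{n+1} + p_n, and likewise for q. *)
Fixpoint cf_pq2 (a : nat -> nat) (n : nat) : (nat * nat) * (nat * nat) :=
  match n with
  | O => ((0%nat, 1%nat), (1%nat, a O))
  | S n' =>
      let '((p0, q0), (p1, q1)) := cf_pq2 a n' in
      ((p1, q1), (a (S n') * p1 + p0, a (S n') * q1 + q0)%nat)
  end.

Definition cf_p (a : nat -> nat) (n : nat) : nat := fst (fst (cf_pq2 a n)).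
Definition cf_q (a : nat -> nat) (n : nat) : nat := snd (fst (cf_pq2 a n)).

Definition is_cf (alpha : R) (a : nat -> nat) : Prop :=
  (forall i, (1 <= a i)%nat) /\
  is_lim_seq (fun n => INR (cf_p a n) / INR (cf_q a n)) alpha.

Definition begins_with (a : nat -> nat) (W : list nat) : Prop :=
  forall i, (i < List.length W)%nat -> a i = List.nth i W 0%nat.

Definition pos_word (W : list nat) : Prop := List.Forall (fun w => (1 <= w)%nat) W.

(* l |-> q_l^{1/l}, reindexed from l = 1 (value at n is q_{n+1}^{1/(n+1)}). *)
Definition qroot (a : nat -> nat) (n : nat) : R :=
  Rpower (INR (cf_q a (S n))) (/ INR (S n)).

(* Write n = |V U rev(U)| and r = |V|, and let M(W) be the product of the matrices
   [[w, 1], [1, 0]] over the letters of W.  Then M(V U rev(U)) M(V)^T = A A^T with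
   A = M(V) M(U) is symmetric: its entries Q ~ q_n q_r, P1, P2 satisfy
   |Q alpha - P1|, |P1 alpha - P2| <= 2 q_r / q_n, a simultaneous approximation of
   (1, alpha, alpha^2).  For beta = (c1 alpha + c2) / (c3 alpha + c4) the integer
   N = c4 Q + c3 P1 then has N ||N alpha|| ||N beta|| << q_r^3 / q_n.  Finally
   q_r <= exp (r (log M + o(1))) and q_n >= exp (n (log m - o(1))); as
   |U_k| >= x |V_k| and x > 3/2 log M / log m - 1/2, the ratio q_r^3 / q_n tends to 0. *)

From Stdlib Require Import Reals Lra Lia List ZArith.
From Coquelicot Require Import Coquelicot.
Open Scope R_scope.

(** * Continuants and the error of the convergents *)

Section Continuants.

Variable a : nat -> nat.

Lemma cf_q_SS n : cf_q a (S (S n)) = (a (S n) * cf_q a (S n) + cf_q a n)%nat.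
Proof. unfold cf_q; simpl; destruct (cf_pq2 a n) as [[p0 q0] [p1 q1]]; reflexivity. Qed.

Lemma cf_p_SS n : cf_p a (S (S n)) = (a (S n) * cf_p a (S n) + cf_p a n)%nat.
Proof. unfold cf_p; simpl; destruct (cf_pq2 a n) as [[p0 q0] [p1 q1]]; reflexivity. Qed.

Lemma cf_det n :
  INR (cf_p a (S n)) * INR (cf_q a n) - INR (cf_p a n) * INR (cf_q a (S n)) = (-1) ^ n.
Proof.
  induction n as [|n IH]; [simpl; ring|].
  rewrite cf_p_SS, cf_q_SS, !plus_INR, !mult_INR, <- tech_pow_Rmult, <- IH; ring.
Qed.

Hypothesis Ha : forall i, (1 <= a i)%nat.

Lemma cf_q_ge1_le_S n : (1 <= cf_q a n <= cf_q a (S n))%nat.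
Proof.
  induction n as [|n IH]; [unfold cf_q; simpl; specialize (Ha 0%nat); lia|].
  rewrite cf_q_SS; specialize (Ha (S n)); nia.
Qed.

Lemma cf_q_ge1 n : (1 <= cf_q a n)%nat.
Proof. apply cf_q_ge1_le_S. Qed.

Lemma cf_q_mono i j : (i <= j)%nat -> (cf_q a i <= cf_q a j)%nat.
Proof. induction 1; [lia|]; pose proof (cf_q_ge1_le_S m); lia. Qed.

Lemma cf_q_double n : (2 * cf_q a n <= cf_q a (S (S n)))%nat.
Proof. rewrite cf_q_SS; pose proof (cf_q_ge1_le_S n); specialize (Ha (S n)); nia. Qed.

Lemma cf_p_le_q n : (cf_p a n <= cf_q a n)%nat.
Proof.
  enough (H : (cf_p a n <= cf_q a n /\ cf_p a (S n) <= cf_q a (S n))%nat) by apply H.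
  induction n as [|n IH]; [simpl; specialize (Ha 0%nat); unfold cf_p, cf_q; simpl; lia|].
  split; [apply IH|]; rewrite cf_q_SS, cf_p_SS; nia.
Qed.

Lemma pow2_le_cf_q_cube l : (2 <= l)%nat -> (2 ^ l <= cf_q a l ^ 3)%nat.
Proof.
  enough (H : forall j, (2 ^ (j + 2) <= cf_q a (j + 2) ^ 3 /\
                         2 ^ (j + 3) <= cf_q a (j + 3) ^ 3)%nat).
  { intro Hl; replace l with (l - 2 + 2)%nat by lia; apply H. }
  induction j as [|j [IH1 IH2]].
  - pose proof (cf_q_double 0); pose proof (cf_q_mono 2 3 ltac:(lia)); simpl in *; nia.
  - split; [replace (S j + 2)%nat with (j + 3)%nat by lia; exact IH2|].
    pose proof (Nat.pow_le_mono_l _ _ 3 (cf_q_double (j + 2))) as Hd.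
    replace (S (S (j + 2))) with (S j + 3)%nat in Hd by lia.
    rewrite Nat.pow_mul_l in Hd.
    replace (S j + 3)%nat with (j + 2 + 2)%nat at 1 by lia.
    rewrite Nat.pow_add_r; simpl (2 ^ 2)%nat; simpl (2 ^ 3)%nat in Hd; lia.
Qed.

Lemma cf_q_pos n : 0 < INR (cf_q a n).
Proof. apply (lt_INR 0); pose proof (cf_q_ge1 n); lia. Qed.

Definition cf_q_prev n := match n with O => 0%nat | S k => cf_q a k end.
Definition cf_p_prev n := match n with O => 1%nat | S k => cf_p a k end.

Lemma cf_q_prev_le n : (cf_q_prev n <= cf_q a n)%nat.
Proof. destruct n; simpl; [lia|]; apply cf_q_mono; lia. Qed.

Lemma cf_p_prev_le_q n : (cf_p_prev n <= cf_q a n)%nat.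
Proof.
  destruct n; simpl; [apply cf_q_ge1|].
  pose proof (cf_p_le_q n); pose proof (cf_q_mono n (S n) ltac:(lia)); lia.
Qed.

(* p_(j+2) - c q_(j+2) is a nonnegative combination of p_(j+1) - c q_(j+1) and p_j - c q_j. *)
Lemma cf_band_stable c e n :
  Rabs (INR (cf_p a n) - c * INR (cf_q a n)) <= e * INR (cf_q a n) ->
  Rabs (INR (cf_p a (S n)) - c * INR (cf_q a (S n))) <= e * INR (cf_q a (S n)) ->
  forall j, (n <= j)%nat -> Rabs (INR (cf_p a j) - c * INR (cf_q a j)) <= e * INR (cf_q a j).
Proof.
  set (band j := Rabs (INR (cf_p a j) - c * INR (cf_q a j)) <= e * INR (cf_q a j)).
  intros H0 H1.
  enough (H : forall i, band (i + n)%nat /\ band (S (i + n))).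
  { intros j Hj; replace j with (j - n + n)%nat by lia; apply H. }
  induction i as [|i [IH0 IH1]]; [split; assumption|].
  split; [exact IH1|]; unfold band in *; simpl.
  rewrite cf_p_SS, cf_q_SS, !plus_INR, !mult_INR.
  pose proof (pos_INR (a (S (i + n)))) as HA.
  replace (INR (a (S (i + n))) * INR (cf_p a (S (i + n))) + INR (cf_p a (i + n)) -
           c * (INR (a (S (i + n))) * INR (cf_q a (S (i + n))) + INR (cf_q a (i + n))))
    with (INR (a (S (i + n))) * (INR (cf_p a (S (i + n))) - c * INR (cf_q a (S (i + n)))) +
          (INR (cf_p a (i + n)) - c * INR (cf_q a (i + n)))) by ring.
  eapply Rle_trans; [apply Rabs_triang|]; rewrite Rabs_mult, (Rabs_pos_eq _ HA).
  apply Rmult_le_compat_l with (r := INR (a (S (i + n)))) in IH1; [nra|exact HA].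
Qed.

Lemma cf_convergent_dist n j : (n <= j)%nat ->
  Rabs (INR (cf_p a j) / INR (cf_q a j) - INR (cf_p a n) / INR (cf_q a n))
  <= / (INR (cf_q a n) * INR (cf_q a (S n))).
Proof.
  intro Hj.
  pose proof (cf_q_pos n) as Hq; pose proof (cf_q_pos (S n)) as HqS; pose proof (cf_q_pos j).
  set (c := INR (cf_p a n) / INR (cf_q a n)); set (e := / (INR (cf_q a n) * INR (cf_q a (S n)))).
  replace (INR (cf_p a j) / INR (cf_q a j) - c)
    with ((INR (cf_p a j) - c * INR (cf_q a j)) / INR (cf_q a j)) by (field; lra).
  unfold Rdiv; rewrite Rabs_mult, Rabs_inv, (Rabs_pos_eq (INR (cf_q a j))) by lra.
  apply (Rmult_le_reg_r (INR (cf_q a j))); [lra|].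
  rewrite Rmult_assoc, Rinv_l, Rmult_1_r by lra.
  apply (cf_band_stable c e n); [| |exact Hj].
  - unfold c; replace (INR (cf_p a n) - INR (cf_p a n) / INR (cf_q a n) * INR (cf_q a n))
      with 0 by (field; lra).
    rewrite Rabs_R0; unfold e; apply Rmult_le_pos; [|lra].
    apply Rlt_le, Rinv_0_lt_compat; nra.
  - unfold c, e; replace (INR (cf_p a (S n)) - INR (cf_p a n) / INR (cf_q a n) * INR (cf_q a (S n)))
      with ((INR (cf_p a (S n)) * INR (cf_q a n) - INR (cf_p a n) * INR (cf_q a (S n)))
            / INR (cf_q a n)) by (field; lra).
    rewrite cf_det; unfold Rdiv; rewrite Rabs_mult, pow_1_abs, Rabs_inv, Rabs_pos_eq by lra.
    right; field; lra.
Qed.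

Variable alpha : R.
Hypothesis Hlim : is_lim_seq (fun n => INR (cf_p a n) / INR (cf_q a n)) alpha.

Lemma cf_err n : Rabs (INR (cf_q a n) * alpha - INR (cf_p a n)) <= / INR (cf_q a (S n)).
Proof.
  pose proof (cf_q_pos n) as Hq; pose proof (cf_q_pos (S n)) as HqS.
  set (c := INR (cf_p a n) / INR (cf_q a n)).
  set (e := / (INR (cf_q a n) * INR (cf_q a (S n)))).
  assert (Hdist : Rabs (alpha - c) <= e).
  { apply (is_lim_seq_le_loc (fun j => Rabs (INR (cf_p a j) / INR (cf_q a j) - c))
             (fun _ => e) (Rabs (alpha - c)) e).
    - exists n; intros j Hj; exact (cf_convergent_dist n j Hj).
    - apply (is_lim_seq_abs _ (alpha - c)), is_lim_seq_minus'; [exact Hlim|apply is_lim_seq_const].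
    - apply is_lim_seq_const. }
  replace (INR (cf_q a n) * alpha - INR (cf_p a n)) with (INR (cf_q a n) * (alpha - c))
    by (unfold c; field; lra).
  rewrite Rabs_mult, Rabs_pos_eq by lra.
  apply Rmult_le_compat_l with (r := INR (cf_q a n)) in Hdist; [|lra].
  replace (INR (cf_q a n) * e) with (/ INR (cf_q a (S n))) in Hdist by (unfold e; field; lra).
  exact Hdist.
Qed.

Lemma cf_err_prev n :
  Rabs (INR (cf_q_prev n) * alpha - INR (cf_p_prev n)) <= / INR (cf_q a n).
Proof.
  destruct n as [|n]; [|apply cf_err].
  simpl; unfold cf_q; simpl; rewrite Rmult_0_l, Rminus_0_l, Rabs_Ropp, Rabs_R1, Rinv_1; lra.
Qed.

Lemma cf_err_le n : Rabs (INR (cf_q a n) * alpha - INR (cf_p a n)) <= / INR (cf_q a n).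
Proof.
  eapply Rle_trans; [apply cf_err|].
  apply Rinv_le_contravar; [apply cf_q_pos|apply le_INR, cf_q_mono; lia].
Qed.

End Continuants.

(** * Matrices of partial quotients *)

Record mat2 := Mat2 { m11 : nat; m12 : nat; m21 : nat; m22 : nat }.

Definition mmul (A B : mat2) : mat2 :=
  Mat2 (m11 A * m11 B + m12 A * m21 B) (m11 A * m12 B + m12 A * m22 B)
       (m21 A * m11 B + m22 A * m21 B) (m21 A * m12 B + m22 A * m22 B).

Definition mtr (A : mat2) : mat2 := Mat2 (m11 A) (m21 A) (m12 A) (m22 A).

Definition mat1 : mat2 := Mat2 1 0 0 1.

Lemma mmulA A B C : mmul (mmul A B) C = mmul A (mmul B C).
Proof. destruct A, B, C; unfold mmul; simpl; f_equal; ring. Qed.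

Lemma mmul1m A : mmul mat1 A = A.
Proof. destruct A; unfold mmul; simpl; f_equal; ring. Qed.

Lemma mmulm1 A : mmul A mat1 = A.
Proof. destruct A; unfold mmul; simpl; f_equal; ring. Qed.

Lemma mtr_mmul A B : mtr (mmul A B) = mmul (mtr B) (mtr A).
Proof. destruct A, B; unfold mmul, mtr; simpl; f_equal; ring. Qed.

Lemma mtrK A : mtr (mtr A) = A.
Proof. destruct A; reflexivity. Qed.

Lemma mmul_mtr_sym A : mtr (mmul A (mtr A)) = mmul A (mtr A).
Proof. rewrite mtr_mmul, mtrK; reflexivity. Qed.

Definition pq_mat (w : nat) : mat2 := Mat2 w 1 1 0.

Fixpoint word_mat (W : list nat) : mat2 :=
  match W with nil => mat1 | w :: W' => mmul (pq_mat w) (word_mat W') end.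

Lemma word_mat_cat W1 W2 : word_mat (W1 ++ W2) = mmul (word_mat W1) (word_mat W2).
Proof. induction W1 as [|w W IH]; simpl; [now rewrite mmul1m|now rewrite IH, mmulA]. Qed.

Lemma word_mat_rev W : word_mat (rev W) = mtr (word_mat W).
Proof.
  induction W as [|w W IH]; [reflexivity|].
  cbn [rev word_mat]; rewrite word_mat_cat, IH, mtr_mmul; cbn [word_mat].
  rewrite mmulm1; reflexivity.
Qed.

Lemma word_mat_palindrome_sym V U :
  let A := mmul (word_mat (V ++ U ++ rev U)) (mtr (word_mat V)) in mtr A = A.
Proof.
  intro A.
  replace A with (mmul (mmul (word_mat V) (word_mat U)) (mtr (mmul (word_mat V) (word_mat U))))
    by (unfold A; rewrite !word_mat_cat, word_mat_rev, mtr_mmul, !mmulA; reflexivity).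
  apply mmul_mtr_sym.
Qed.

Definition prefix (a : nat -> nat) (n : nat) : list nat := map a (seq 0 n).

Lemma begins_with_prefix a W : begins_with a W -> W = prefix a (length W).
Proof.
  intro H; apply nth_ext with (d := 0%nat) (d' := 0%nat);
    unfold prefix; rewrite ?length_map, ?length_seq; [reflexivity|].
  intros i Hi; rewrite <- H by exact Hi.
  rewrite nth_indep with (d' := a 0%nat) by (rewrite length_map, length_seq; lia).
  rewrite map_nth, seq_nth by lia; reflexivity.
Qed.

Lemma begins_with_catl a W1 W2 : begins_with a (W1 ++ W2) -> begins_with a W1.
Proof. intros H i Hi; rewrite H by (rewrite length_app; lia); now rewrite app_nth1. Qed.

Definition conv_mat (a : nat -> nat) (n : nat) : mat2 :=
  Mat2 (cf_q a n) (cf_q_prev a n) (cf_p a n) (cf_p_prev a n).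

Lemma word_mat_prefix a n : word_mat (prefix a n) = conv_mat a n.
Proof.
  induction n as [|n IH]; [reflexivity|].
  unfold prefix; rewrite seq_S, map_app; fold (prefix a n).
  rewrite word_mat_cat, IH; simpl; rewrite mmulm1.
  destruct n as [|n]; unfold conv_mat, mmul; simpl.
  - unfold cf_q, cf_p; simpl; f_equal; ring.
  - rewrite cf_q_SS, cf_p_SS; f_equal; ring.
Qed.

Lemma palindromic_prefix_identity a V U :
  begins_with a (V ++ U ++ rev U) ->
  let n := length (V ++ U ++ rev U) in let r := length V in
  (cf_q a n * cf_p a r + cf_q_prev a n * cf_p_prev a r =
   cf_p a n * cf_q a r + cf_p_prev a n * cf_q_prev a r)%nat.
Proof.
  intros H n r.
  pose proof (word_mat_palindrome_sym V U) as Hsym; cbv zeta in Hsym.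
  set (W := V ++ U ++ rev U) in H, Hsym.
  rewrite (begins_with_prefix _ _ H), (begins_with_prefix _ _ (begins_with_catl _ _ _ H)),
    !word_mat_prefix in Hsym.
  exact (eq_sym (f_equal m12 Hsym)).
Qed.

(** * Simultaneous approximation from palindromes *)

Definition simultaneous_approx (alpha X delta : R) (Q P1 P2 : nat) : Prop :=
  1 <= X /\ X <= INR Q <= 2 * X /\ INR P1 <= 2 * X /\
  Rabs (INR Q * alpha - INR P1) <= delta /\ Rabs (INR P1 * alpha - INR P2) <= delta.

Lemma Rabs_lincomb_le u v e e' t :
  0 <= u -> 0 <= v -> Rabs e <= t -> Rabs e' <= t -> Rabs (u * e + v * e') <= (u + v) * t.
Proof.
  intros Hu Hv He He'; eapply Rle_trans; [apply Rabs_triang|].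
  rewrite !Rabs_mult, (Rabs_pos_eq u), (Rabs_pos_eq v) by assumption.
  apply Rmult_le_compat_l with (r := u) in He; [|exact Hu].
  apply Rmult_le_compat_l with (r := v) in He'; [|exact Hv]; lra.
Qed.

(* The witnesses are the entries of conv_mat n * (conv_mat r)^T, where n = |V U rev(U)|
   and r = |V|; P1 has two expressions by palindromic_prefix_identity. *)
Lemma palindromic_prefix_approx alpha a V U :
  is_cf alpha a -> begins_with a (V ++ U ++ rev U) ->
  let qn := INR (cf_q a (length (V ++ U ++ rev U))) in
  let qr := INR (cf_q a (length V)) in
  exists Q P1 P2, simultaneous_approx alpha (qn * qr) (2 * qr / qn) Q P1 P2.
Proof.
  intros [Ha Hlim] Hpre.
  pose proof (palindromic_prefix_identity a V U Hpre) as Hsym; cbv zeta in Hsym.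
  set (n := length (V ++ U ++ rev U)) in *; set (r := length V) in *; intros qn qr.
  pose proof (cf_q_prev_le a Ha n); pose proof (cf_q_prev_le a Ha r).
  pose proof (cf_p_le_q a Ha n); pose proof (cf_p_le_q a Ha r).
  pose proof (cf_p_prev_le_q a Ha n); pose proof (cf_p_prev_le_q a Ha r).
  pose proof (cf_q_ge1 a Ha n); pose proof (cf_q_ge1 a Ha r).
  assert (Hqn : 0 < qn) by apply cf_q_pos, Ha.
  assert (Hcomb : forall u v : nat, (u + v <= 2 * cf_q a r)%nat ->
    Rabs (INR u * (INR (cf_q a n) * alpha - INR (cf_p a n)) +
          INR v * (INR (cf_q_prev a n) * alpha - INR (cf_p_prev a n))) <= 2 * qr / qn).
  { intros u v Huv; eapply Rle_trans.
    - apply Rabs_lincomb_le; try apply pos_INR;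
        [apply cf_err_le|apply cf_err_prev]; assumption.
    - rewrite <- plus_INR; apply le_INR in Huv; rewrite mult_INR in Huv.
      unfold Rdiv; apply Rmult_le_compat_r; [apply Rlt_le, Rinv_0_lt_compat, Hqn|exact Huv]. }
  exists (cf_q a n * cf_q a r + cf_q_prev a n * cf_q_prev a r)%nat,
         (cf_p a n * cf_q a r + cf_p_prev a n * cf_q_prev a r)%nat,
         (cf_p a n * cf_p a r + cf_p_prev a n * cf_p_prev a r)%nat.
  repeat split.
  1-4: unfold qn, qr; rewrite <- mult_INR;
    try (replace 2 with (INR 2) by reflexivity; rewrite <- mult_INR);
    first [apply (le_INR 1) | apply le_INR]; nia.
  - replace (INR (cf_q a n * cf_q a r + cf_q_prev a n * cf_q_prev a r) * alpha -
             INR (cf_p a n * cf_q a r + cf_p_prev a n * cf_q_prev a r))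
      with (INR (cf_q a r) * (INR (cf_q a n) * alpha - INR (cf_p a n)) +
            INR (cf_q_prev a r) * (INR (cf_q_prev a n) * alpha - INR (cf_p_prev a n)))
      by (rewrite !plus_INR, !mult_INR; ring).
    apply Hcomb; lia.
  - rewrite <- Hsym.
    replace (INR (cf_q a n * cf_p a r + cf_q_prev a n * cf_p_prev a r) * alpha -
             INR (cf_p a n * cf_p a r + cf_p_prev a n * cf_p_prev a r))
      with (INR (cf_p a r) * (INR (cf_q a n) * alpha - INR (cf_p a n)) +
            INR (cf_p_prev a r) * (INR (cf_q_prev a n) * alpha - INR (cf_p_prev a n)))
      by (rewrite !plus_INR, !mult_INR; ring).
    apply Hcomb; lia.
Qed.

(** * Homographic images *)

Lemma dnint_ge0 y : 0 <= dnint y.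
Proof. unfold dnint; pose proof (base_fp y); apply Rmin_glb; lra. Qed.

Lemma dnint_le_dist y (K : Z) : dnint y <= Rabs (y - IZR K).
Proof.
  unfold dnint; pose proof (base_fp y) as [H0 H1].
  replace (y - IZR K) with (frac_part y + IZR (Int_part y - K))
    by (unfold frac_part; rewrite minus_IZR; ring).
  destruct (Z_lt_le_dec (Int_part y - K) 0) as [Hneg|Hnn].
  - assert (IZR (Int_part y - K) <= -1) by (apply IZR_le; lia).
    rewrite Rabs_left by lra; pose proof (Rmin_r (frac_part y) (1 - frac_part y)); lra.
  - apply IZR_le in Hnn; rewrite Rabs_right by lra.
    pose proof (Rmin_l (frac_part y) (1 - frac_part y)); lra.
Qed.

Lemma dnint_Zabs_mul_le (N K : Z) y : dnint (IZR (Z.abs N) * y) <= Rabs (IZR N * y - IZR K).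
Proof.
  destruct (Z_lt_le_dec N 0).
  - rewrite Z.abs_neq, opp_IZR by lia.
    eapply Rle_trans; [apply (dnint_le_dist _ (- K))|].
    rewrite opp_IZR, <- Rabs_Ropp; right; f_equal; ring.
  - rewrite Z.abs_eq by lia; apply dnint_le_dist.
Qed.

Lemma Bad_irrational alpha (c3 c4 : Z) :
  Bad alpha -> (c3 <> 0 \/ c4 <> 0)%Z -> IZR c3 * alpha + IZR c4 <> 0.
Proof.
  intros [c [Hc Hbad]] Hc34 Hrat.
  destruct (Z.eq_dec c3 0) as [->|Hc3].
  - destruct Hc34 as [|Hc4]; [lia|]; apply Hc4, eq_IZR; lra.
  - specialize (Hbad (Z.to_nat (Z.abs c3)) ltac:(lia)).
    rewrite INR_IZR_INZ, Z2Nat.id in Hbad by lia.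
    pose proof (dnint_Zabs_mul_le c3 (- c4) alpha) as Hint.
    rewrite opp_IZR in Hint; replace (IZR c3 * alpha - - IZR c4) with 0 in Hint by lra.
    rewrite Rabs_R0 in Hint; pose proof (dnint_ge0 (IZR (Z.abs c3) * alpha)).
    assert (Hzero : IZR (Z.abs c3) * dnint (IZR (Z.abs c3) * alpha) = 0)
      by (replace (dnint (IZR (Z.abs c3) * alpha)) with 0 by lra; ring).
    lra.
Qed.

Lemma dnint_product_le alpha beta (N K1 K2 : Z) : N <> 0%Z ->
  exists q, (1 <= q)%nat /\ INR q * dnint (INR q * alpha) * dnint (INR q * beta)
    <= Rabs (IZR N) * Rabs (IZR N * alpha - IZR K1) * Rabs (IZR N * beta - IZR K2).
Proof.
  intro HN; exists (Z.to_nat (Z.abs N)); split; [lia|].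
  assert (Hq : INR (Z.to_nat (Z.abs N)) = IZR (Z.abs N))
    by (rewrite INR_IZR_INZ, Z2Nat.id by lia; reflexivity).
  rewrite Hq; pose proof (IZR_le _ _ (Z.abs_nonneg N)).
  apply Rmult_le_compat; try apply Rmult_le_pos; try apply dnint_ge0; try lra;
    [|apply dnint_Zabs_mul_le].
  rewrite <- abs_IZR.
  apply Rmult_le_compat; try apply dnint_ge0; [lra|lra|apply dnint_Zabs_mul_le].
Qed.

Lemma is_glb_Rbar_0 (E : R -> Prop) :
  (forall y, E y -> 0 <= y) -> (forall eps, 0 < eps -> exists y, E y /\ y < eps) ->
  is_glb_Rbar E (Finite 0).
Proof.
  intros Hge Hsmall; split.
  - intros y Hy; apply Hge, Hy.
  - intros [b| |] Hb; simpl; trivial.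
    + destruct (Rle_lt_dec b 0) as [Hb0|Hb0]; [exact Hb0|].
      destruct (Hsmall b Hb0) as [y [Hy Hyb]]; specialize (Hb y Hy); simpl in Hb; lra.
    + destruct (Hsmall 1 Rlt_0_1) as [y [Hy _]]; exact (Hb y Hy).
Qed.

Section Homography.

Variables (alpha beta : R) (c1 c2 c3 c4 : Z).
Hypothesis Hden : IZR c3 * alpha + IZR c4 <> 0.
Hypothesis Hbeta : beta * (IZR c3 * alpha + IZR c4) = IZR c1 * alpha + IZR c2.

Let S34 := Rabs (IZR c3) + Rabs (IZR c4).
Let S1b := Rabs (IZR c1) + Rabs (IZR c3) * Rabs beta.

(* N := c4 Q + c3 P1 is close to Q (c3 alpha + c4), while N alpha and N beta are
   within O(delta) of the integers c4 P1 + c3 P2 and c1 P1 + c2 Q. *)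
Lemma homography_integer_approx X delta Q P1 P2 :
  simultaneous_approx alpha X delta Q P1 P2 ->
  exists N K1 K2 : Z,
    X * Rabs (IZR c3 * alpha + IZR c4) - Rabs (IZR c3) * delta <= Rabs (IZR N) /\
    Rabs (IZR N) <= S34 * (2 * X) /\
    Rabs (IZR N * alpha - IZR K1) <= S34 * delta /\ Rabs (IZR N * beta - IZR K2) <= S1b * delta.
Proof.
  intros (HX & HQ & HP1 & HE1 & HE2).
  set (N := (c4 * Z.of_nat Q + c3 * Z.of_nat P1)%Z).
  assert (HN : IZR N = IZR c4 * INR Q + IZR c3 * INR P1)
    by (unfold N; rewrite plus_IZR, !mult_IZR, <- !INR_IZR_INZ; reflexivity).
  pose proof (Rabs_pos (IZR c1)); pose proof (Rabs_pos (IZR c3)); pose proof (Rabs_pos (IZR c4)).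
  pose proof (Rabs_pos beta); pose proof (Rabs_pos (INR Q * alpha - INR P1)).
  pose proof (pos_INR P1).
  assert (Hlow : X * Rabs (IZR c3 * alpha + IZR c4) - Rabs (IZR c3) * delta <= Rabs (IZR N)).
  { replace (IZR N) with (INR Q * (IZR c3 * alpha + IZR c4) - IZR c3 * (INR Q * alpha - INR P1))
      by (rewrite HN; ring).
    eapply Rle_trans; [|apply Rabs_triang_inv].
    rewrite !Rabs_mult, (Rabs_pos_eq (INR Q)) by lra.
    pose proof (Rabs_pos (IZR c3 * alpha + IZR c4)); nra. }
  assert (Hup : Rabs (IZR N) <= S34 * (2 * X)).
  { rewrite HN; eapply Rle_trans; [apply Rabs_triang|].
    rewrite !Rabs_mult, (Rabs_pos_eq (INR Q)), (Rabs_pos_eq (INR P1)) by lra.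
    unfold S34; nra. }
  assert (HNalpha : Rabs (IZR N * alpha - IZR (c4 * Z.of_nat P1 + c3 * Z.of_nat P2)) <= S34 * delta).
  { rewrite plus_IZR, !mult_IZR, <- !INR_IZR_INZ, HN.
    replace ((IZR c4 * INR Q + IZR c3 * INR P1) * alpha - (IZR c4 * INR P1 + IZR c3 * INR P2))
      with (IZR c4 * (INR Q * alpha - INR P1) + IZR c3 * (INR P1 * alpha - INR P2)) by ring.
    eapply Rle_trans; [apply Rabs_triang|]; rewrite !Rabs_mult; unfold S34; nra. }
  assert (HNbeta : Rabs (IZR N * beta - IZR (c1 * Z.of_nat P1 + c2 * Z.of_nat Q)) <= S1b * delta).
  { rewrite plus_IZR, !mult_IZR, <- !INR_IZR_INZ, HN.
    replace ((IZR c4 * INR Q + IZR c3 * INR P1) * beta - (IZR c1 * INR P1 + IZR c2 * INR Q))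
      with ((IZR c1 - IZR c3 * beta) * (INR Q * alpha - INR P1) +
            INR Q * (beta * (IZR c3 * alpha + IZR c4) - (IZR c1 * alpha + IZR c2))) by ring.
    rewrite Hbeta, Rminus_diag, Rmult_0_r, Rplus_0_r, Rabs_mult.
    apply Rmult_le_compat; try apply Rabs_pos; [|exact HE1].
    unfold Rminus; eapply Rle_trans; [apply Rabs_triang|].
    rewrite Rabs_Ropp, Rabs_mult; unfold S1b; lra. }
  exists N, (c4 * Z.of_nat P1 + c3 * Z.of_nat P2)%Z, (c1 * Z.of_nat P1 + c2 * Z.of_nat Q)%Z.
  repeat split; assumption.
Qed.

Lemma homography_approx_product X delta Q P1 P2 :
  simultaneous_approx alpha X delta Q P1 P2 ->
  Rabs (IZR c3) * delta < X * Rabs (IZR c3 * alpha + IZR c4) ->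
  exists q, (1 <= q)%nat /\
    INR q * dnint (INR q * alpha) * dnint (INR q * beta) <= 2 * S34 ^ 2 * S1b * (X * delta ^ 2).
Proof.
  intros Happ Hsmall.
  destruct (homography_integer_approx X delta Q P1 P2 Happ)
    as (N & K1 & K2 & Hlow & Hup & HNalpha & HNbeta).
  assert (HN0 : N <> 0%Z) by (intros Hz; rewrite Hz, Rabs_R0 in Hlow; lra).
  destruct (dnint_product_le alpha beta N K1 K2 HN0) as [q [Hq Hprod]].
  exists q; split; [exact Hq|].
  eapply Rle_trans; [exact Hprod|].
  apply Rle_trans with ((S34 * (2 * X)) * (S34 * delta) * (S1b * delta)); [|right; ring].
  apply Rmult_le_compat; try apply Rmult_le_pos; try apply Rabs_pos; [|exact HNbeta].
  apply Rmult_le_compat; try apply Rabs_pos; assumption.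
Qed.

Lemma homography_product_glb_0 :
  (forall eta, 0 < eta -> exists X delta Q P1 P2,
      simultaneous_approx alpha X delta Q P1 P2 /\ X * delta ^ 2 < eta) ->
  is_glb_Rbar (fun y => exists q : nat, (1 <= q)%nat /\
                 y = INR q * dnint (INR q * alpha) * dnint (INR q * beta)) (Finite 0).
Proof.
  intros Happrox; apply is_glb_Rbar_0.
  { intros y [q [_ ->]]; pose proof (pos_INR q); pose proof (dnint_ge0 (INR q * alpha));
      pose proof (dnint_ge0 (INR q * beta)); apply Rmult_le_pos; [apply Rmult_le_pos|]; lra. }
  intros eps Heps.
  set (K := 2 * S34 ^ 2 * S1b).
  assert (HK : 0 <= K).
  { apply Rmult_le_pos; [apply Rmult_le_pos; [lra|apply pow2_ge_0]|].
    pose proof (Rabs_pos (IZR c1)); pose proof (Rabs_pos (IZR c3)).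
    pose proof (Rmult_le_pos _ _ (Rabs_pos (IZR c3)) (Rabs_pos beta)); unfold S1b; lra. }
  set (d0 := Rabs (IZR c3 * alpha + IZR c4)).
  assert (Hd0 : 0 < d0) by (apply Rabs_pos_lt, Hden).
  set (t := d0 / (Rabs (IZR c3) + 1)).
  pose proof (Rabs_pos (IZR c3)).
  assert (Ht : 0 < t) by (apply Rdiv_lt_0_compat; lra).
  destruct (Happrox (Rmin (eps / (K + 1)) (t ^ 2)))
    as (X & delta & Q & P1 & P2 & Happ & Hsmall).
  { apply Rmin_glb_lt; [apply Rdiv_lt_0_compat; lra|apply pow_lt, Ht]. }
  pose proof (Rmin_l (eps / (K + 1)) (t ^ 2)); pose proof (Rmin_r (eps / (K + 1)) (t ^ 2)).
  assert (HX : 1 <= X) by apply Happ.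
  assert (Hdelta0 : 0 <= delta) by (eapply Rle_trans; [apply Rabs_pos|apply Happ]).
  assert (Hdelta : delta < t).
  { destruct (Rlt_le_dec delta t) as [|Hge]; [assumption|exfalso].
    assert (t ^ 2 <= delta ^ 2) by (apply pow_incr; lra).
    assert (0 <= (X - 1) * delta ^ 2) by (apply Rmult_le_pos; [lra|apply pow2_ge_0]); lra. }
  assert (Hc3 : Rabs (IZR c3) * delta < X * d0).
  { apply Rle_lt_trans with (Rabs (IZR c3) * t); [nra|].
    apply Rlt_le_trans with d0; [|nra].
    apply (Rmult_lt_reg_r (Rabs (IZR c3) + 1)); [lra|].
    replace (Rabs (IZR c3) * t * (Rabs (IZR c3) + 1)) with (Rabs (IZR c3) * d0)
      by (unfold t; field; lra); nra. }
  destruct (homography_approx_product X delta Q P1 P2 Happ Hc3) as [q [Hq Hprod]].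
  exists (INR q * dnint (INR q * alpha) * dnint (INR q * beta)); split; [exists q; auto|].
  fold K in Hprod; apply Rle_lt_trans with (K * (eps / (K + 1))); [nra|].
  apply (Rmult_lt_reg_r (K + 1)); [lra|].
  replace (K * (eps / (K + 1)) * (K + 1)) with (K * eps) by (field; lra); nra.
Qed.

End Homography.

(** * Growth of the continuants *)

Lemma is_LimInf_seq_ge (u : nat -> R) (c m : R) :
  is_LimInf_seq u (Finite m) -> (forall n, (1 <= n)%nat -> c <= u n) -> c <= m.
Proof.
  intros Hm Hc; destruct (Rle_lt_dec c m) as [|Hlt]; [assumption|exfalso].
  destruct (Hm (mkposreal (c - m) ltac:(lra))) as [Hinf _].
  destruct (Hinf 1%nat) as [n [Hn Hu]]; specialize (Hc n Hn); simpl in Hu; lra.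
Qed.

Lemma is_LimSup_seq_ln_lt (u : nat -> R) (M d : R) :
  is_LimSup_seq u (Finite M) -> 0 < M -> 0 < d -> (forall n, 0 < u n) ->
  exists N, forall n, (N <= n)%nat -> ln (u n) < ln M + d.
Proof.
  intros HM HM0 Hd Hu.
  assert (Heps : 0 < M * (exp d - 1)).
  { apply Rmult_lt_0_compat; [exact HM0|]; pose proof (exp_increasing 0 d Hd); rewrite exp_0 in *; lra. }
  destruct (HM (mkposreal _ Heps)) as [_ [N HN]]; exists N; intros n Hn.
  specialize (HN n Hn); simpl in HN.
  replace (M + M * (exp d - 1)) with (exp (ln M + d)) in HN
    by (rewrite exp_plus, exp_ln by lra; ring).
  rewrite <- (ln_exp (ln M + d)); apply ln_increasing; [apply Hu|exact HN].
Qed.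

Lemma is_LimInf_seq_ln_gt (u : nat -> R) (m d : R) :
  is_LimInf_seq u (Finite m) -> 0 < m -> 0 < d -> (forall n, 0 < u n) ->
  exists N, forall n, (N <= n)%nat -> ln m - d < ln (u n).
Proof.
  intros Hm Hm0 Hd Hu.
  assert (Heps : 0 < m * (1 - exp (- d))).
  { apply Rmult_lt_0_compat; [exact Hm0|].
    pose proof (exp_increasing (- d) 0 ltac:(lra)); rewrite exp_0 in *; lra. }
  destruct (Hm (mkposreal _ Heps)) as [_ [N HN]]; exists N; intros n Hn.
  specialize (HN n Hn); simpl in HN.
  replace (m - m * (1 - exp (- d))) with (exp (ln m - d)) in HN
    by (unfold Rminus; rewrite exp_plus, exp_ln by lra; ring).
  rewrite <- (ln_exp (ln m - d)); apply ln_increasing; [apply exp_pos|exact HN].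
Qed.

Section Growth.

Variable a : nat -> nat.
Hypothesis Ha : forall i, (1 <= a i)%nat.

Lemma qroot_pos n : 0 < qroot a n.
Proof. apply exp_pos. Qed.

Lemma ln_qroot n : ln (qroot a n) = ln (INR (cf_q a (S n))) / INR (S n).
Proof. unfold qroot; rewrite ln_Rpower; unfold Rdiv; ring. Qed.

Lemma qroot_ge_cbrt2 n : (1 <= n)%nat -> exp (ln 2 / 3) <= qroot a n.
Proof.
  intro Hn; pose proof (cf_q_pos a Ha (S n)) as Hq.
  assert (Hcube : 2 ^ S n <= INR (cf_q a (S n)) ^ 3).
  { replace 2 with (INR 2) by reflexivity; rewrite <- !pow_INR.
    apply le_INR, pow2_le_cf_q_cube; [exact Ha|lia]. }
  apply ln_le in Hcube; [|apply pow_lt; lra].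
  rewrite !ln_pow in Hcube by lra; replace (INR 3) with 3 in Hcube by (simpl; ring).
  assert (Hexp : ln 2 / 3 <= / INR (S n) * ln (INR (cf_q a (S n)))).
  { pose proof (lt_0_INR (S n) ltac:(lia)).
    apply (Rmult_le_reg_r (3 * INR (S n))); [lra|].
    replace (/ INR (S n) * ln (INR (cf_q a (S n))) * (3 * INR (S n)))
      with (3 * ln (INR (cf_q a (S n)))) by (field; lra).
    replace (ln 2 / 3 * (3 * INR (S n))) with (INR (S n) * ln 2) by field; exact Hcube. }
  unfold qroot, Rpower; destruct Hexp as [Hlt|Heq]; [left; apply exp_increasing, Hlt|now rewrite Heq].
Qed.

Lemma qroot_liminf_gt1 m : is_LimInf_seq (qroot a) (Finite m) -> 1 < m.
Proof.
  intro Hm; eapply Rlt_le_trans; [|apply (is_LimInf_seq_ge _ _ m Hm qroot_ge_cbrt2)].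
  rewrite <- exp_0; apply exp_increasing; pose proof ln_lt_2; lra.
Qed.

Lemma ln_cf_q_affine_upper M d :
  is_LimSup_seq (qroot a) (Finite M) -> 0 < M -> 0 < d -> 0 <= ln M + d ->
  exists C, forall i, ln (INR (cf_q a i)) <= C + INR i * (ln M + d).
Proof.
  intros HM HM0 Hd HLd.
  destruct (is_LimSup_seq_ln_lt _ M d HM HM0 Hd qroot_pos) as [N HN].
  exists (ln (INR (cf_q a (S N)))); intro i.
  assert (HC : 0 <= ln (INR (cf_q a (S N)))).
  { rewrite <- ln_1; apply ln_le; [lra|apply (le_INR 1), cf_q_ge1, Ha]. }
  pose proof (Rmult_le_pos _ _ (pos_INR i) HLd).
  destruct (le_lt_dec i (S N)) as [Hi|Hi].
  - enough (ln (INR (cf_q a i)) <= ln (INR (cf_q a (S N)))) by lra.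
    apply ln_le; [apply cf_q_pos, Ha|apply le_INR, cf_q_mono; assumption].
  - destruct i as [|n]; [lia|].
    specialize (HN n ltac:(lia)); rewrite ln_qroot in HN.
    pose proof (lt_0_INR (S n) ltac:(lia)).
    apply (Rmult_lt_compat_r (INR (S n))) in HN; [|lra].
    replace (ln (INR (cf_q a (S n))) / INR (S n) * INR (S n)) with (ln (INR (cf_q a (S n))))
      in HN by (field; lra); lra.
Qed.

Lemma ln_cf_q_eventual_lower m d :
  is_LimInf_seq (qroot a) (Finite m) -> 0 < m -> 0 < d ->
  exists N, forall i, (N <= i)%nat -> INR i * (ln m - d) <= ln (INR (cf_q a i)).
Proof.
  intros Hm Hm0 Hd.
  destruct (is_LimInf_seq_ln_gt _ m d Hm Hm0 Hd qroot_pos) as [N HN].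
  exists (S N); intros [|n] Hn; [lia|].
  specialize (HN n ltac:(lia)); rewrite ln_qroot in HN.
  pose proof (lt_0_INR (S n) ltac:(lia)).
  apply (Rmult_lt_compat_r (INR (S n))) in HN; [|lra].
  replace (ln (INR (cf_q a (S n))) / INR (S n) * INR (S n)) with (ln (INR (cf_q a (S n))))
    in HN by (field; lra); lra.
Qed.

End Growth.

(* Since x r <= s, the quantity 3 g(r) - g(r + 2 s) is at most 3 C - s ((1 + 2x) Ll - 3 Lu) / x. *)
Lemma palindrome_log_defect_unbounded (g : nat -> R) (C Lu Ll x : R) (N1 : nat)
  (r s : nat -> nat) :
  0 < x -> (forall i, g i <= C + INR i * Lu) -> (forall i, (N1 <= i)%nat -> INR i * Ll <= g i) ->
  0 <= 3 * Lu - Ll -> 3 * Lu < (1 + 2 * x) * Ll ->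
  (forall k, x * INR (r k) <= INR (s k)) -> (forall k, (k <= s k)%nat) ->
  forall T, exists k, 3 * g (r k) - g (r k + 2 * s k)%nat < T.
Proof.
  intros Hx Hup Hlow HLu Hgap Hrs Hs T.
  set (gam := (1 + 2 * x) * Ll - 3 * Lu).
  destruct (INR_unbounded ((3 * C - T) * x / gam)) as [k0 Hk0].
  set (k := max k0 N1); exists k.
  assert (Hsk : INR k0 <= INR (s k)) by (apply le_INR; specialize (Hs k); lia).
  pose proof (Hup (r k)) as Hr.
  pose proof (Hlow (r k + 2 * s k)%nat ltac:(specialize (Hs k); lia)) as Hn.
  rewrite plus_INR, mult_INR in Hn; simpl (INR 2) in Hn.
  specialize (Hrs k).
  assert (Hkey : x * (3 * g (r k) - g (r k + 2 * s k)%nat) <= 3 * C * x - INR (s k) * gam).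
  { assert (x * INR (r k) * (3 * Lu - Ll) <= INR (s k) * (3 * Lu - Ll))
      by (apply Rmult_le_compat_r; assumption).
    unfold gam; nra. }
  assert (Hgam : 0 < gam) by (unfold gam; lra).
  assert ((3 * C - T) * x < INR (s k) * gam).
  { apply Rlt_le_trans with (INR k0 * gam); [|apply Rmult_le_compat_r; lra].
    apply (Rmult_lt_compat_r gam) in Hk0; [|exact Hgam].
    unfold Rdiv in Hk0; rewrite Rmult_assoc, Rinv_l, Rmult_1_r in Hk0 by lra; lra. }
  apply (Rmult_lt_reg_l x); [exact Hx|]; nra.
Qed.

Lemma log_margin_exists (L l x : R) :
  0 < l -> 0 < x -> x > 3 / 2 * (L / l) - 1 / 2 ->
  exists d, 0 < d /\ 3 * (L + d) < (1 + 2 * x) * (l - d).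
Proof.
  intros Hl Hx0 Hx.
  set (G := (1 + 2 * x) * l - 3 * L).
  assert (HG : 0 < G).
  { apply (Rmult_gt_compat_l (2 * l)) in Hx; [|lra].
    replace (2 * l * (3 / 2 * (L / l) - 1 / 2)) with (3 * L - l) in Hx by (field; lra).
    unfold G; lra. }
  exists (G / (2 * (4 + 2 * x))); split; [apply Rdiv_lt_0_compat; lra|].
  replace ((1 + 2 * x) * (l - G / (2 * (4 + 2 * x))))
    with (G / 2 + 3 * L + 3 * (G / (2 * (4 + 2 * x)))) by (unfold G; field; lra).
  lra.
Qed.

Lemma palindromic_ratio_vanishes (a : nat -> nat) (Ha : forall i, (1 <= a i)%nat)
  (x : R) (Hx0 : 0 < x) (U V : nat -> list nat)
  (Hgrow : forall k, (length (U k) < length (U (S k)))%nat)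
  (Hlen : forall k, INR (length (U k)) >= x * INR (length (V k)))
  (M m : R) (HM : is_LimSup_seq (qroot a) (Finite M)) (Hm : is_LimInf_seq (qroot a) (Finite m))
  (Hx : x > 3 / 2 * (ln M / ln m) - 1 / 2) :
  forall eta, 0 < eta -> exists k,
    INR (cf_q a (length (V k))) ^ 3 / INR (cf_q a (length (V k ++ U k ++ rev (U k)))) < eta.
Proof.
  intros eta Heta.
  pose proof (qroot_liminf_gt1 a Ha m Hm) as Hm1.
  assert (HmM : m <= M) by exact (is_LimSup_LimInf_seq_le _ _ _ HM Hm).
  assert (Hl : 0 < ln m) by (rewrite <- ln_1; apply ln_increasing; lra).
  assert (HLl : ln m <= ln M) by (apply ln_le; lra).
  destruct (log_margin_exists (ln M) (ln m) x Hl Hx0 Hx) as [d [Hd Hgap]].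
  destruct (ln_cf_q_affine_upper a Ha M d HM ltac:(lra) Hd ltac:(lra)) as [C HC].
  destruct (ln_cf_q_eventual_lower a m d Hm ltac:(lra) Hd) as [N1 HN1].
  assert (Hs : forall k, (k <= length (U k))%nat)
    by (induction k; [lia|specialize (Hgrow k); lia]).
  destruct (palindrome_log_defect_unbounded (fun i => ln (INR (cf_q a i))) C (ln M + d) (ln m - d)
              x N1 (fun k => length (V k)) (fun k => length (U k)) Hx0 HC HN1
              ltac:(lra) Hgap ltac:(intro k; specialize (Hlen k); lra) Hs (ln eta))
    as [k Hk].
  exists k; cbv beta in Hk.
  rewrite !length_app, length_rev.
  replace (length (V k) + (length (U k) + length (U k)))%nat
    with (length (V k) + 2 * length (U k))%nat by lia.
  pose proof (cf_q_pos a Ha (length (V k))); pose proof (cf_q_pos a Ha (length (V k) + 2 * length (U k))).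
  apply ln_lt_inv; [apply Rdiv_lt_0_compat; [apply pow_lt|]; lra|exact Heta|].
  rewrite ln_div, ln_pow by (try apply pow_lt; lra).
  replace (INR 3) with 3 by (simpl; ring); exact Hk.
Qed.

Theorem theorem5 (alpha : R) (a : nat -> nat)
  (Hcf : is_cf alpha a) (Hbad : Bad alpha)
  (x : R) (Hxrat : exists r s : nat, (0 < r)%nat /\ (0 < s)%nat /\ x = INR r / INR s)
  (U V : nat -> list nat)
  (HUpos : forall k, pos_word (U k)) (HVpos : forall k, pos_word (V k))
  (Hpref : forall k, begins_with a (V k ++ U k ++ List.rev (U k)))
  (Hgrow : forall k, (List.length (U k) < length (U (S k)))%nat)
  (Hlen : forall k, INR (List.length (U k)) >= x * INR (List.length (V k)))
  (M m : R)
  (HM : is_LimSup_seq (qroot a) (Finite M))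
  (Hm : is_LimInf_seq (qroot a) (Finite m))
  (Hx : x > 3 / 2 * (ln M / ln m) - 1 / 2) :
  forall beta : R,
    (exists c1 c2 c3 c4 : Z, (c1 * c4 - c2 * c3 <> 0)%Z /\
       beta = (IZR c1 * alpha + IZR c2) / (IZR c3 * alpha + IZR c4)) ->
    is_glb_Rbar
      (fun y : R => exists q : nat, (1 <= q)%nat /\
         y = INR q * dnint (INR q * alpha) * dnint (INR q * beta))
      (Finite 0).
Proof.
  intros beta (c1 & c2 & c3 & c4 & Hdet & ->).
  pose proof (proj1 Hcf) as Ha.
  assert (Hx0 : 0 < x)
    by (destruct Hxrat as (r & s & Hr & Hs & ->); apply Rdiv_lt_0_compat; apply lt_0_INR; assumption).
  assert (Hden : IZR c3 * alpha + IZR c4 <> 0).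
  { apply Bad_irrational; [exact Hbad|].
    destruct (Z.eq_dec c3 0) as [->|Hc3]; [right; intros ->; lia|left; exact Hc3]. }
  apply (homography_product_glb_0 alpha _ c1 c2 c3 c4 Hden); [field; exact Hden|].
  intros eta Heta.
  destruct (palindromic_ratio_vanishes a Ha x Hx0 U V Hgrow Hlen M m HM Hm Hx (eta / 4))
    as [k Hk]; [lra|].
  destruct (palindromic_prefix_approx alpha a (V k) (U k) Hcf (Hpref k)) as (Q & P1 & P2 & Happ).
  do 5 eexists; split; [exact Happ|].
  pose proof (cf_q_pos a Ha (length (V k ++ U k ++ rev (U k)))).
  match goal with |- ?qn * ?qr * (2 * _ / _) ^ 2 < _ =>
    replace (qn * qr * (2 * qr / qn) ^ 2) with (4 * (qr ^ 3 / qn)) by (field; lra) end.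
  lra.
Qed.
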